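(* For every $\alpha>0$, the function $$y\mapsto 1+2\sum_{k=1}^\infty e^{-\frac{\pi\alpha}{y}k^2}\cos\Big(2\pi k\big(\tfrac12-\tfrac1{8y^2}\big)\Big)$$ is monotonically decreasing on $[\sqrt3/2,\infty)$. *)

From Stdlib Require Import Reals.
From Coquelicot Require Import Coquelicot.
Open Scope R_scope.

Definition theta_term (alpha y : R) (k : nat) : R :=
  exp (- (PI * alpha / y) * (INR k) ^ 2)
  * cos (2 * PI * INR k * (1 / 2 - 1 / (8 * y ^ 2))).

(* f_alpha(y) = 1 + 2 * sum_{k>=1} theta_term alpha y k.
   Coquelicot's [Series a] is sum_{n>=0} a n, so we shift the index by one. *)
Definition theta_fun (alpha y : R) : R :=
  1 + 2 * Series (fun n : nat => theta_term alpha y (S n)).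

(* The function is f_alpha y = theta3 (pi alpha / y) (pi - pi / (4 y^2)), where
   theta3 a t = 1 + 2 sum_(k >= 1) exp (- a k^2) cos (k t).

   By the Jacobi triple product, with q = exp (- a), theta3 a t is a positive multiple of
   prod_(n >= 1) (1 + 2 q^(2n-1) cos t + q^(4n-2)).  Each factor is nonnegative, nonincreasing
   on [0, pi] and midpoint convex on [pi/2, pi]; these properties survive products and limits,
   so theta3 a is nonincreasing on [0, pi] and convex on [pi/2, pi].  By the heat equation
   d theta3 / da = d^2 theta3 / dt^2, convexity in t makes theta3 nondecreasing in a for t in
   (pi/2, pi).  For y >= sqrt 3 / 2 the angle stays in (pi/2, pi) and grows with y, while
   a = pi alpha / y shrinks, so both effects make f_alpha decrease.

   The triple product is obtained as the limit of its finite version, whose coefficients are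
   q^(j^2) times Gaussian binomial coefficients; normalized, these tend to 1 fast enough. *)

From Stdlib Require Import Reals Lra Lia Psatz ZArith.
From Coquelicot Require Import Coquelicot.
Open Scope R_scope.

(** * Finite sums *)

Fixpoint fsum (f : nat -> R) (n : nat) : R :=
  match n with O => 0 | S n => fsum f n + f n end.

Lemma fsum_ext f g n : (forall j, (j < n)%nat -> f j = g j) -> fsum f n = fsum g n.
Proof. induction n; simpl; intros H; auto. rewrite IHn, H; auto. Qed.

Lemma fsum_plus f g n : fsum (fun j => f j + g j) n = fsum f n + fsum g n.
Proof. induction n; simpl; [ring | rewrite IHn; ring]. Qed.

Lemma fsum_minus f g n : fsum (fun j => f j - g j) n = fsum f n - fsum g n.
Proof. induction n; simpl; [ring | rewrite IHn; ring]. Qed.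

Lemma fsum_scal c f n : fsum (fun j => c * f j) n = c * fsum f n.
Proof. induction n; simpl; [ring | rewrite IHn; ring]. Qed.

Lemma fsum_const c n : fsum (fun _ => c) n = INR n * c.
Proof. induction n; simpl fsum; [simpl; ring | rewrite IHn, S_INR; ring]. Qed.

Lemma fsum_front f n : fsum f (S n) = f O + fsum (fun j => f (S j)) n.
Proof. induction n; simpl in *; [ring | rewrite IHn; ring]. Qed.

Lemma fsum_abs f n : Rabs (fsum f n) <= fsum (fun j => Rabs (f j)) n.
Proof.
  induction n; simpl; [rewrite Rabs_R0; lra |].
  eapply Rle_trans; [apply Rabs_triang | lra].
Qed.

Lemma fsum_le f g n : (forall j, (j < n)%nat -> f j <= g j) -> fsum f n <= fsum g n.
Proof.
  induction n; simpl; intros H; [lra |].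
  assert (f n <= g n) by (apply H; lia).
  assert (fsum f n <= fsum g n) by (apply IHn; intros; apply H; lia).
  lra.
Qed.

Lemma fsum_sum_n f N : fsum f (S N) = sum_n f N.
Proof.
  induction N; [simpl; rewrite sum_O; ring |].
  rewrite sum_Sn, <- IHN. reflexivity.
Qed.

Lemma fsum_shift_support (g : Z -> R) L d s :
  (forall z, (z < 0 \/ Z.of_nat L <= z)%Z -> g z = 0) -> (s <= d)%nat ->
  fsum (fun j => g (Z.of_nat j - Z.of_nat s)%Z) (L + d) = fsum (fun j => g (Z.of_nat j)) L.
Proof.
  intros Hg. revert d. induction s as [|s IH]; intros d Hsd.
  - rewrite (fsum_ext _ (fun j => g (Z.of_nat j))) by (intros j _; f_equal; lia).
    clear Hsd. induction d as [|d IHd]; [rewrite Nat.add_0_r; reflexivity |].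
    rewrite Nat.add_succ_r. simpl. rewrite IHd, Hg by lia. ring.
  - destruct d as [|d]; [lia |].
    rewrite Nat.add_succ_r, fsum_front, Hg by lia.
    rewrite <- (IH d) by lia. rewrite Rplus_0_l.
    apply fsum_ext. intros j _. f_equal. lia.
Qed.

Lemma fsum_centered_even (h : R -> R) (Hh : forall t, h (- t) = h t) N :
  fsum (fun j => h (INR j - INR N)) (2 * N + 1) = h 0 + 2 * fsum (fun n => h (INR (S n))) N.
Proof.
  induction N as [|N IH]; [simpl; rewrite Rminus_0_r; ring |].
  replace (2 * S N + 1)%nat with (S (S (2 * N + 1))) by lia.
  rewrite fsum_front. cbn [fsum].
  rewrite (fsum_ext (fun j => h (INR (S j) - INR (S N))) (fun j => h (INR j - INR N))).
  2: { intros j _. f_equal. rewrite !S_INR. ring. }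
  rewrite IH.
  replace (INR 0 - INR (S N)) with (- INR (S N)) by (simpl; ring). rewrite Hh.
  replace (INR (S (2 * N + 1)) - INR (S N)) with (INR (S N)).
  2: { rewrite !S_INR, plus_INR, mult_INR. simpl. ring. }
  ring.
Qed.

Lemma is_lim_seq_fsum (f : nat -> R) : ex_series f -> is_lim_seq (fsum f) (Series f).
Proof.
  intros H. apply is_lim_seq_incr_1.
  eapply is_lim_seq_ext; [intro n; symmetry; apply fsum_sum_n |].
  exact (Series_correct _ H).
Qed.

Lemma is_lim_seq_series_tail (f : nat -> R) :
  ex_series f -> is_lim_seq (fun N => Series f - fsum f N) 0.
Proof.
  intros H. replace 0 with (Series f - Series f) by ring.
  apply is_lim_seq_minus'; [apply is_lim_seq_const | apply is_lim_seq_fsum; auto].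
Qed.

Lemma ex_series_dominated (f b : nat -> R) :
  (forall n, Rabs (f n) <= b n) -> ex_series b -> ex_series f.
Proof. apply (@ex_series_le R_AbsRing R_CompleteNormedModule). Qed.

Lemma series_tail_le (f b : nat -> R) N :
  (forall n, Rabs (f n) <= b n) -> ex_series b ->
  Rabs (Series f - fsum f N) <= Series b - fsum b N.
Proof.
  revert f b. induction N as [|N IH]; intros f b Hfb Hb.
  - simpl. rewrite !Rminus_0_r.
    eapply Rle_trans; [apply Series_Rabs |].
    + apply (ex_series_dominated _ b); auto. intro n; rewrite Rabs_Rabsolu; auto.
    + apply Series_le; auto. intro n; split; [apply Rabs_pos | auto].
  - assert (Hf : ex_series f) by (apply (ex_series_dominated f b); auto).
    rewrite !fsum_front, (Series_incr_1 f Hf), (Series_incr_1 b Hb).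
    replace (f 0%nat + Series (fun k => f (S k)) - (f 0%nat + fsum (fun j => f (S j)) N))
      with (Series (fun k => f (S k)) - fsum (fun j => f (S j)) N) by ring.
    replace (b 0%nat + Series (fun k => b (S k)) - (b 0%nat + fsum (fun j => b (S j)) N))
      with (Series (fun k => b (S k)) - fsum (fun j => b (S j)) N) by ring.
    apply IH; auto. now apply (proj1 (ex_series_incr_1 b)).
Qed.

Lemma exp_le_compat x y : x <= y -> exp x <= exp y.
Proof. intros [H | ->]; [left; apply exp_increasing | right]; auto. Qed.

Lemma exp_nat_mul (n : nat) (x : R) : exp (INR n * x) = exp x ^ n.
Proof.
  induction n as [|n IH]; [simpl; rewrite Rmult_0_l; apply exp_0 |].
  rewrite S_INR, Rmult_plus_distr_r, Rmult_1_l, exp_plus, IH; simpl; ring.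
Qed.

Lemma pow_le_fact_exp (m : nat) (x : R) : 0 <= x -> x ^ m <= INR (fact m) * exp x.
Proof.
  intros Hx.
  assert (Hs : x ^ m / INR (fact m) <= sum_f_R0 (fun k => x ^ k / INR (fact k)) m).
  { destruct m as [|m]; [simpl; lra |].
    rewrite tech5.
    assert (0 <= sum_f_R0 (fun k => x ^ k / INR (fact k)) m); [| lra].
    apply cond_pos_sum. intro k. apply Rmult_le_pos; [apply pow_le; lra |].
    apply Rlt_le, Rinv_0_lt_compat, INR_fact_lt_0. }
  assert (Hf := INR_fact_lt_0 m). assert (H := exp_ge_taylor x m Hx).
  apply (Rmult_le_reg_r (/ INR (fact m))); [apply Rinv_0_lt_compat; lra |].
  replace (INR (fact m) * exp x * / INR (fact m)) with (exp x) by (field; lra).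
  lra.
Qed.

(** Since [k <= k^2], a Gaussian weight is dominated by a geometric one. *)
Lemma gauss_moment_le_geom (a : R) (m k : nat) : 0 < a ->
  INR k ^ m * exp (- a * INR k ^ 2) <= INR (fact m) * (2 / a) ^ m * exp (- a / 2) ^ k.
Proof.
  intros Ha.
  assert (Hk : 0 <= INR k) by apply pos_INR.
  assert (Hk2 : INR k <= INR k ^ 2).
  { destruct k; [simpl; lra |]. assert (1 <= INR (S k)) by (apply (le_INR 1); lia). nra. }
  assert (Hkm : INR k ^ m <= INR (fact m) * (2 / a) ^ m * exp (a / 2 * INR k)).
  { assert (H := pow_le_fact_exp m (a / 2 * INR k) ltac:(apply Rmult_le_pos; lra)).
    rewrite Rpow_mult_distr in H.
    assert (Hpm : 0 < (a / 2) ^ m) by (apply pow_lt; lra).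
    apply (Rmult_le_reg_l ((a / 2) ^ m)); auto.
    replace ((a / 2) ^ m * (INR (fact m) * (2 / a) ^ m * exp (a / 2 * INR k)))
      with (INR (fact m) * exp (a / 2 * INR k) * ((a / 2 * (2 / a)) ^ m))
      by (rewrite Rpow_mult_distr; ring).
    replace (a / 2 * (2 / a)) with 1 by (field; lra). rewrite pow1. lra. }
  rewrite <- exp_nat_mul.
  replace (INR k * (- a / 2)) with (- a * INR k + a / 2 * INR k) by field.
  rewrite exp_plus.
  assert (He := exp_pos (- a * INR k)).
  apply Rle_trans with (INR k ^ m * exp (- a * INR k)).
  - apply Rmult_le_compat_l; [apply pow_le; auto |]. apply exp_le_compat. nra.
  - replace (INR (fact m) * (2 / a) ^ m * (exp (- a * INR k) * exp (a / 2 * INR k)))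
      with (INR (fact m) * (2 / a) ^ m * exp (a / 2 * INR k) * exp (- a * INR k)) by ring.
    apply Rmult_le_compat_r; lra.
Qed.

Lemma ex_series_gauss_moment (a : R) (m : nat) (g : nat -> R) : 0 < a ->
  (forall n, Rabs (g n) <= 1) ->
  ex_series (fun n => INR (S n) ^ m * exp (- a * INR (S n) ^ 2) * g n).
Proof.
  intros Ha Hg.
  apply (ex_series_dominated _
           (fun n => INR (fact m) * (2 / a) ^ m * exp (- a / 2) * exp (- a / 2) ^ n)).
  - intro n.
    assert (H := gauss_moment_le_geom a m (S n) Ha).
    assert (0 <= INR (S n) ^ m * exp (- a * INR (S n) ^ 2)).
    { apply Rmult_le_pos; [apply pow_le, pos_INR | left; apply exp_pos]. }
    rewrite Rabs_mult, Rabs_right by lra.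
    apply Rle_trans with (INR (S n) ^ m * exp (- a * INR (S n) ^ 2) * 1).
    + apply Rmult_le_compat_l; auto.
    + rewrite Rmult_1_r. eapply Rle_trans; [exact H | right; simpl; ring].
  - apply (ex_series_scal_l (V := R_NormedModule)).
    apply ex_series_geom. rewrite Rabs_right by (left; apply exp_pos).
    rewrite <- exp_0. apply exp_increasing; lra.
Qed.

(** * The finite Jacobi triple product *)

Section TripleProduct.

Variable a : R.
Hypothesis Ha : 0 < a.

(** Throughout, [q = exp (- a)]; [q2pow t] is [q ^ (2 t)] and [qpoch n] is [(q^2; q^2)_n]. *)
Definition q2pow (t : R) : R := exp (- 2 * a * t).

Fixpoint qpoch (n : nat) : R :=
  match n with O => 1 | S m => qpoch m * (1 - q2pow (INR (S m))) end.

Definition qpoch_inv (z : Z) : R :=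
  match z with Zneg _ => 0 | _ => / qpoch (Z.to_nat z) end.

Lemma q2pow_pos t : 0 < q2pow t.
Proof. apply exp_pos. Qed.

Lemma q2pow_S_lt_1 n : q2pow (INR (S n)) < 1.
Proof.
  assert (0 < INR (S n)) by (apply lt_0_INR; lia).
  unfold q2pow; rewrite <- exp_0; apply exp_increasing; nra.
Qed.

Lemma q2pow_le s t : s <= t -> q2pow t <= q2pow s.
Proof. intros; apply exp_le_compat; nra. Qed.

Lemma qpoch_pos n : 0 < qpoch n.
Proof.
  induction n; cbn [qpoch]; [lra |].
  assert (H := q2pow_S_lt_1 n). apply Rmult_lt_0_compat; lra.
Qed.

Lemma qpoch_inv_neg z : (z < 0)%Z -> qpoch_inv z = 0.
Proof. destruct z; simpl; auto; lia. Qed.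

Lemma qpoch_inv_nonneg z : (0 <= z)%Z -> qpoch_inv z = / qpoch (Z.to_nat z).
Proof. destruct z; simpl; auto; lia. Qed.

Lemma qpoch_inv_pred z : qpoch_inv (z - 1) = (1 - q2pow (IZR z)) * qpoch_inv z.
Proof.
  destruct (Z_lt_le_dec z 0) as [H | H].
  { rewrite !qpoch_inv_neg by lia. ring. }
  destruct (Z.eq_dec z 0) as [-> | E].
  { rewrite qpoch_inv_neg by lia. unfold q2pow. rewrite Rmult_0_r, exp_0. ring. }
  rewrite !qpoch_inv_nonneg by lia.
  replace (Z.to_nat z) with (S (Z.to_nat (z - 1))) by lia.
  replace (IZR z) with (INR (S (Z.to_nat (z - 1)))).
  2: { rewrite INR_IZR_INZ. f_equal. lia. }
  cbn [qpoch].
  assert (Hp := qpoch_pos (Z.to_nat (z - 1))).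
  assert (Hq := q2pow_S_lt_1 (Z.to_nat (z - 1))).
  field. split; lra.
Qed.

Lemma qpoch_inv_pred2 z :
  qpoch_inv (z - 2) = (1 - q2pow (IZR z) * exp (2 * a)) * ((1 - q2pow (IZR z)) * qpoch_inv z).
Proof.
  replace (z - 2)%Z with (z - 1 - 1)%Z by ring.
  rewrite !qpoch_inv_pred, minus_IZR. unfold q2pow. rewrite <- exp_plus. do 3 f_equal. ring.
Qed.

(** [tp_coef N j] is [q^((j - N)^2)] times the Gaussian binomial coefficient
    [[2N choose j]] in base [q^2]; it vanishes for [j] outside [[0, 2N]]. *)
Definition tp_coef (N : nat) (j : Z) : R :=
  qpoch (2 * N) * qpoch_inv j * qpoch_inv (2 * Z.of_nat N - j) * exp (- a * (IZR j - INR N) ^ 2).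

Lemma tp_coef_outside N z : (z < 0 \/ 2 * Z.of_nat N < z)%Z -> tp_coef N z = 0.
Proof.
  intros [H | H]; unfold tp_coef;
    [rewrite (qpoch_inv_neg z) | rewrite (qpoch_inv_neg (2 * Z.of_nat N - z))]; lia || ring.
Qed.

Lemma tp_coef_center_pos N : 0 < tp_coef N (Z.of_nat N).
Proof.
  unfold tp_coef. rewrite !qpoch_inv_nonneg by lia.
  apply Rmult_lt_0_compat; [| apply exp_pos].
  repeat apply Rmult_lt_0_compat; try apply Rinv_0_lt_compat; apply qpoch_pos.
Qed.

(** The [q]-Pascal recurrence behind the triple product. *)
Lemma tp_coef_succ N j :
  let r := exp (- a * (2 * INR N + 1)) in
  tp_coef (S N) j = (1 + r ^ 2) * tp_coef N (j - 1) + r * tp_coef N (j - 2) + r * tp_coef N j.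
Proof.
  intros r. unfold tp_coef.
  set (k := (2 * Z.of_nat (S N) - j)%Z).
  replace (2 * Z.of_nat N - (j - 1))%Z with (k - 1)%Z by (unfold k; lia).
  replace (2 * Z.of_nat N - j)%Z with (k - 2)%Z by (unfold k; lia).
  replace (2 * Z.of_nat N - (j - 2))%Z with k by (unfold k; lia).
  rewrite !qpoch_inv_pred, !qpoch_inv_pred2.
  assert (Hk : IZR k = 2 * INR N + 2 - IZR j).
  { unfold k. rewrite minus_IZR, mult_IZR, <- INR_IZR_INZ, S_INR. simpl. ring. }
  set (u := q2pow (IZR j)). set (v := q2pow (IZR k)). set (p := exp (2 * a)).
  set (K := exp (- a * (IZR j - INR (S N)) ^ 2)).
  assert (Hpoch : qpoch (2 * S N) = qpoch (2 * N) * (1 - u * v * p) * (1 - u * v)).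
  { replace (2 * S N)%nat with (S (S (2 * N))) by lia. cbn [qpoch].
    replace (u * v * p) with (q2pow (INR (S (2 * N)))) by
      (unfold u, v, p, q2pow; rewrite <- !exp_plus, Hk, !S_INR, mult_INR; f_equal; simpl; ring).
    replace (u * v) with (q2pow (INR (S (S (2 * N))))) by
      (unfold u, v, q2pow; rewrite <- !exp_plus, Hk, !S_INR, mult_INR; f_equal; simpl; ring).
    ring. }
  assert (E1 : exp (- a * (IZR (j - 1) - INR N) ^ 2) = K).
  { unfold K. f_equal. rewrite minus_IZR, S_INR. ring. }
  assert (Hr : 0 < r) by apply exp_pos.
  assert (E2 : exp (- a * (IZR (j - 2) - INR N) ^ 2) = K * v / r).
  { apply (Rmult_eq_reg_l r); [| lra]. field_simplify; [| lra].
    unfold K, r, v, q2pow. rewrite <- !exp_plus, Hk. f_equal. rewrite minus_IZR, S_INR. ring. }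
  assert (E3 : exp (- a * (IZR j - INR N) ^ 2) = K * u / r).
  { apply (Rmult_eq_reg_l r); [| lra]. field_simplify; [| lra].
    unfold K, r, u, q2pow. rewrite <- !exp_plus. f_equal. rewrite S_INR. ring. }
  assert (E4 : r ^ 2 = u * v * p).
  { unfold r, u, v, p, q2pow. rewrite <- !exp_plus, Hk. simpl. rewrite Rmult_1_r, <- exp_plus.
    f_equal. ring. }
  rewrite Hpoch, E1, E2, E3, E4. fold K. field. lra.
Qed.

Fixpoint tp_prod (t : R) (N : nat) : R :=
  match N with
  | O => 1
  | S M => tp_prod t M * (1 + 2 * exp (- a * (2 * INR M + 1)) * cos t
                            + exp (- a * (2 * INR M + 1)) ^ 2)
  end.

Definition tp_sum (t : R) (N : nat) : R :=
  fsum (fun j => tp_coef N (Z.of_nat j) * cos ((IZR (Z.of_nat j) - INR N) * t)) (2 * N + 1).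

Lemma tp_prod_sum t N : tp_prod t N = tp_sum t N.
Proof.
  induction N as [|N IH].
  { unfold tp_sum, tp_coef. simpl. rewrite Rminus_0_r, !Rmult_0_l, Rmult_0_r, exp_0, cos_0.
    field. }
  cbn [tp_prod]. rewrite IH. symmetry.
  set (r := exp (- a * (2 * INR N + 1))).
  set (g := fun s z => tp_coef N z * cos ((IZR z - INR N) * t + s)).
  assert (Hg : forall s z, (z < 0 \/ Z.of_nat (2 * N + 1) <= z)%Z -> g s z = 0).
  { intros s z Hz. unfold g. rewrite tp_coef_outside by lia. ring. }
  unfold tp_sum at 1. replace (2 * S N + 1)%nat with (2 * N + 1 + 2)%nat by lia.
  transitivity (fsum (fun j => (1 + r ^ 2) * g 0 (Z.of_nat j - Z.of_nat 1)%Z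
                          + r * g t (Z.of_nat j - Z.of_nat 2)%Z
                          + r * g (- t) (Z.of_nat j - Z.of_nat 0)%Z) (2 * N + 1 + 2)).
  { apply fsum_ext. intros j _. unfold g. rewrite tp_coef_succ. fold r.
    replace (Z.of_nat j - Z.of_nat 0)%Z with (Z.of_nat j) by lia.
    replace (Z.of_nat j - Z.of_nat 1)%Z with (Z.of_nat j - 1)%Z by lia.
    replace (Z.of_nat j - Z.of_nat 2)%Z with (Z.of_nat j - 2)%Z by lia.
    rewrite !minus_IZR, S_INR. set (x := IZR (Z.of_nat j)).
    replace ((x - 1 - INR N) * t + 0) with ((x - (INR N + 1)) * t) by ring.
    replace ((x - 2 - INR N) * t + t) with ((x - (INR N + 1)) * t) by ring.
    replace ((x - INR N) * t + - t) with ((x - (INR N + 1)) * t) by ring.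
    ring. }
  rewrite !fsum_plus, !fsum_scal, !fsum_shift_support by (auto || lia).
  unfold tp_sum. rewrite <- !fsum_scal, <- !fsum_plus, Rmult_comm, <- fsum_scal.
  apply fsum_ext. intros j _. unfold g.
  rewrite Rplus_0_r, !cos_plus, cos_neg, sin_neg. ring.
Qed.

End TripleProduct.

Record decr_midconvex (f : R -> R) : Prop := {
  decr_midconvex_nonneg : forall t, 0 <= f t;
  decr_midconvex_decr : forall x y, 0 <= x -> x <= y -> y <= PI -> f y <= f x;
  decr_midconvex_mid : forall x h, 0 <= h -> PI / 2 <= x - h -> x + h <= PI ->
    2 * f x <= f (x + h) + f (x - h) }.

Lemma decr_midconvex_const c : 0 <= c -> decr_midconvex (fun _ => c).
Proof. intros Hc. split; intros; lra. Qed.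

Lemma decr_midconvex_mult f g :
  decr_midconvex f -> decr_midconvex g -> decr_midconvex (fun t => f t * g t).
Proof.
  intros [f0 f1 f2] [g0 g1 g2]. split.
  - intros t; apply Rmult_le_pos; auto.
  - intros x y Hx Hxy Hy. specialize (f1 x y Hx Hxy Hy). specialize (g1 x y Hx Hxy Hy).
    assert (A := f0 y). assert (B := g0 y). nra.
  - intros x h Hh H1 H2.
    assert (HPI := PI_RGT_0).
    assert (Hf := f1 (x - h) (x + h) ltac:(lra) ltac:(lra) H2).
    assert (Hg := g1 (x - h) (x + h) ltac:(lra) ltac:(lra) H2).
    specialize (f2 x h Hh H1 H2). specialize (g2 x h Hh H1 H2).
    assert (A1 := f0 x). assert (A2 := g0 x).
    assert (4 * (f x * g x) <= (f (x + h) + f (x - h)) * (g (x + h) + g (x - h))).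
    { apply Rle_trans with ((f (x + h) + f (x - h)) * (2 * g x)); [nra |].
      apply Rmult_le_compat_l; [| lra]. assert (A3 := f0 (x + h)). assert (A4 := f0 (x - h)). lra. }
    (* Chebyshev: [f] and [g] are ordered alike on [x - h] and [x + h]. *)
    nra.
Qed.

Lemma decr_midconvex_factor r : 0 <= r -> decr_midconvex (fun t => 1 + 2 * r * cos t + r ^ 2).
Proof.
  intros Hr. split.
  - intros t. assert (H := COS_bound t).
    assert (0 <= r * (1 + cos t)) by (apply Rmult_le_pos; lra).
    assert (0 <= (1 - r) * (1 - r)) by apply Rle_0_sqr. lra.
  - intros x y Hx Hxy Hy. assert (H := cos_decr_1 x y Hx ltac:(lra) ltac:(lra) Hy Hxy). nra.
  - intros x h Hh H1 H2. rewrite cos_plus, cos_minus.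
    assert (Hc : cos x <= 0) by (apply cos_le_0; lra).
    assert (Hb := COS_bound h).
    assert (0 <= r * (- cos x * (1 - cos h))) by (apply Rmult_le_pos; [| apply Rmult_le_pos]; lra).
    lra.
Qed.

Lemma decr_midconvex_tp_prod a N : decr_midconvex (fun t => tp_prod a t N).
Proof.
  induction N as [|N IH]; simpl.
  - apply decr_midconvex_const; lra.
  - apply (decr_midconvex_mult (fun t => tp_prod a t N)); auto.
    apply decr_midconvex_factor. left; apply exp_pos.
Qed.

(** * Passage to the limit *)

Section QBinomial.

Variable a : R.
Hypothesis Ha : 0 < a.

Fixpoint qpoch_from (m k : nat) : R :=
  match k with O => 1 | S k' => qpoch_from m k' * (1 - q2pow a (INR (m + S k'))) end.

Lemma qpoch_add m k : qpoch a (m + k) = qpoch a m * qpoch_from m k.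
Proof.
  induction k as [|k IH]; [simpl; rewrite Nat.add_0_r; ring |].
  rewrite Nat.add_succ_r. cbn [qpoch qpoch_from]. rewrite IH, <- Nat.add_succ_r. ring.
Qed.

Lemma qpoch_from_pos m k : 0 < qpoch_from m k.
Proof.
  induction k; cbn [qpoch_from]; [lra |].
  rewrite Nat.add_succ_r. assert (H := q2pow_S_lt_1 a Ha (m + k)).
  apply Rmult_lt_0_compat; lra.
Qed.

Lemma qpoch_from_le_1 m k : qpoch_from m k <= 1.
Proof.
  induction k; cbn [qpoch_from]; [lra |].
  assert (H := qpoch_from_pos m k). assert (H2 := q2pow_pos a (INR (m + S k))).
  apply Rle_trans with (qpoch_from m k * 1); [apply Rmult_le_compat_l |]; lra.
Qed.

Lemma qpoch_from_le m n k : (m <= n)%nat -> qpoch_from m k <= qpoch_from n k.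
Proof.
  intros Hmn. induction k; cbn [qpoch_from]; [lra |].
  assert (H1 := qpoch_from_pos m k).
  assert (q2pow a (INR (n + S k)) <= q2pow a (INR (m + S k)))
    by (apply q2pow_le; [exact Ha | apply le_INR; lia]).
  assert (q2pow a (INR (m + S k)) < 1) by (rewrite Nat.add_succ_r; apply q2pow_S_lt_1; auto).
  apply Rle_trans with (qpoch_from n k * (1 - q2pow a (INR (m + S k)))).
  - apply Rmult_le_compat_r; lra.
  - apply Rmult_le_compat_l; [left; apply qpoch_from_pos | lra].
Qed.

Lemma qpoch_from_ge m k : 1 - INR k * q2pow a (INR (m + 1)) <= qpoch_from m k.
Proof.
  induction k as [|k IH]; cbn [qpoch_from]; [simpl; lra |].
  set (x := q2pow a (INR (m + 1))). set (y := q2pow a (INR (m + S k))).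
  assert (Hy : y <= x) by (apply q2pow_le; [exact Ha | apply le_INR; lia]).
  assert (Hy0 : 0 < y) by apply q2pow_pos.
  assert (Hy1 : y < 1) by (unfold y; rewrite Nat.add_succ_r; apply q2pow_S_lt_1; auto).
  assert (Hk : 0 <= INR k) by apply pos_INR.
  assert ((1 - INR k * x) * (1 - y) <= qpoch_from m k * (1 - y))
    by (apply Rmult_le_compat_r; [lra | exact IH]).
  assert (0 <= INR k * x * y) by (apply Rmult_le_pos; [apply Rmult_le_pos |]; lra).
  rewrite S_INR. lra.
Qed.

Lemma qbinom_ratio_error N k : (k <= N)%nat ->
  Rabs (qpoch a N * qpoch a N / (qpoch a (N - k) * qpoch a (N + k)) - 1) * exp (- a * INR k ^ 2)
  <= INR N * exp (- a * (2 * INR N + 1)).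
Proof.
  intros Hk. set (M := (N - k)%nat).
  assert (HN : N = (M + k)%nat) by (unfold M; lia).
  assert (R1 := qpoch_from_pos M k). assert (R2 := qpoch_from_pos N k).
  assert (Hr : qpoch a N * qpoch a N / (qpoch a M * qpoch a (N + k))
               = qpoch_from M k / qpoch_from N k).
  { assert (E : qpoch a N = qpoch a M * qpoch_from M k) by (rewrite HN at 1; apply qpoch_add).
    assert (HpM := qpoch_pos a Ha M).
    rewrite qpoch_add, E. field. repeat split; lra. }
  assert (Hle : qpoch_from M k / qpoch_from N k <= 1).
  { apply (Rmult_le_reg_r (qpoch_from N k)); auto. unfold Rdiv.
    rewrite Rmult_assoc, Rinv_l, Rmult_1_r, Rmult_1_l by lra. apply qpoch_from_le; lia. }
  assert (Hge : qpoch_from M k <= qpoch_from M k / qpoch_from N k).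
  { apply (Rmult_le_reg_r (qpoch_from N k)); auto. unfold Rdiv.
    rewrite Rmult_assoc, Rinv_l, Rmult_1_r by lra.
    assert (H := qpoch_from_le_1 N k). nra. }
  assert (Hlb := qpoch_from_ge M k).
  rewrite Hr, Rabs_left1 by lra.
  assert (He := exp_pos (- a * INR k ^ 2)).
  apply Rle_trans with (INR k * q2pow a (INR (M + 1)) * exp (- a * INR k ^ 2));
    [apply Rmult_le_compat_r; lra |].
  unfold q2pow. rewrite Rmult_assoc, <- exp_plus.
  assert (HkN : INR N = INR M + INR k) by (rewrite HN, plus_INR; ring).
  assert (Hex : exp (-2 * a * INR (M + 1) + - a * INR k ^ 2) <= exp (- a * (2 * INR N + 1))).
  { apply exp_le_compat. rewrite plus_INR, HkN. simpl (INR 1).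
    assert (0 <= a * ((INR k - 1) * (INR k - 1))) by (apply Rmult_le_pos; [lra | apply Rle_0_sqr]).
    lra. }
  assert (INR k <= INR N) by (apply le_INR; lia).
  apply Rmult_le_compat; auto; [apply pos_INR | left; apply exp_pos].
Qed.

End QBinomial.

Definition theta3_term (a t : R) (n : nat) : R :=
  exp (- a * INR (S n) ^ 2) * cos (INR (S n) * t).

Definition theta3 (a t : R) : R := 1 + 2 * Series (theta3_term a t).

Lemma ex_series_theta3_term a t : 0 < a -> ex_series (theta3_term a t).
Proof.
  intros Ha.
  assert (H := ex_series_gauss_moment a 0 (fun n => cos (INR (S n) * t)) Ha
                 (fun n => Rabs_le _ _ (COS_bound _))).
  eapply ex_series_ext; [| exact H]. intro n. unfold theta3_term. simpl. ring.
Qed.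

Lemma is_lim_seq_div_succ c : is_lim_seq (fun N => c / (INR N + 1)) 0.
Proof.
  replace 0 with (c * 0) by ring.
  apply (is_lim_seq_scal_l (fun N => / (INR N + 1)) c 0).
  replace (Finite 0) with (Rbar_inv p_infty) by reflexivity.
  apply is_lim_seq_inv; [| discriminate].
  eapply is_lim_seq_ext; [intro n; apply S_INR |].
  apply -> is_lim_seq_incr_1. apply is_lim_seq_INR.
Qed.

Section ProductLimit.

Variable a : R.
Hypothesis Ha : 0 < a.

Lemma tp_coef_ratio N j : (j <= 2 * N)%nat ->
  tp_coef a N (Z.of_nat j) / tp_coef a N (Z.of_nat N) =
  qpoch a N * qpoch a N / (qpoch a j * qpoch a (2 * N - j)) * exp (- a * (INR j - INR N) ^ 2).
Proof.
  intros Hj. unfold tp_coef.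
  rewrite !qpoch_inv_nonneg, !Nat2Z.id by lia.
  replace (Z.to_nat (2 * Z.of_nat N - Z.of_nat j)) with (2 * N - j)%nat by lia.
  replace (Z.to_nat (2 * Z.of_nat N - Z.of_nat N)) with N by lia.
  rewrite <- !INR_IZR_INZ, Rminus_diag. replace (- a * 0 ^ 2) with 0 by ring. rewrite exp_0.
  assert (H1 := qpoch_pos a Ha N). assert (H2 := qpoch_pos a Ha j).
  assert (H3 := qpoch_pos a Ha (2 * N - j)). assert (H4 := qpoch_pos a Ha (2 * N)).
  field. repeat split; lra.
Qed.

Lemma tp_coef_ratio_error N j : (j <= 2 * N)%nat ->
  Rabs (tp_coef a N (Z.of_nat j) / tp_coef a N (Z.of_nat N) - exp (- a * (INR j - INR N) ^ 2))
  <= INR N * exp (- a * (2 * INR N + 1)).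
Proof.
  intros Hj. rewrite tp_coef_ratio by lia.
  set (w := qpoch a N * qpoch a N / (qpoch a j * qpoch a (2 * N - j))).
  replace (w * exp (- a * (INR j - INR N) ^ 2) - exp (- a * (INR j - INR N) ^ 2))
    with ((w - 1) * exp (- a * (INR j - INR N) ^ 2)) by ring.
  rewrite Rabs_mult, (Rabs_right (exp _)) by (left; apply exp_pos).
  destruct (le_lt_dec j N) as [HjN | HjN].
  - assert (H := qbinom_ratio_error a Ha N (N - j) ltac:(lia)).
    replace (N - (N - j))%nat with j in H by lia.
    replace (N + (N - j))%nat with (2 * N - j)%nat in H by lia.
    rewrite minus_INR in H by lia.
    replace ((INR j - INR N) ^ 2) with ((INR N - INR j) ^ 2) by ring. exact H.
  - assert (H := qbinom_ratio_error a Ha N (j - N) ltac:(lia)).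
    replace (N - (j - N))%nat with (2 * N - j)%nat in H by lia.
    replace (N + (j - N))%nat with j in H by lia.
    rewrite minus_INR in H by lia.
    unfold w. rewrite (Rmult_comm (qpoch a j)). exact H.
Qed.

Lemma tp_normalized_error t N :
  Rabs (tp_prod a t N / tp_coef a N (Z.of_nat N) - (1 + 2 * fsum (theta3_term a t) N))
  <= INR (2 * N + 1) * (INR N * exp (- a * (2 * INR N + 1))).
Proof.
  set (c := tp_coef a N (Z.of_nat N)).
  set (h := fun s => exp (- a * s ^ 2) * cos (s * t)).
  assert (Hc : 0 < c) by (apply tp_coef_center_pos; exact Ha).
  assert (E : 1 + 2 * fsum (theta3_term a t) N = fsum (fun j => h (INR j - INR N)) (2 * N + 1)).
  { rewrite fsum_centered_even.
    - unfold h. rewrite Rmult_0_l, cos_0. replace (- a * 0 ^ 2) with 0 by ring.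
      rewrite exp_0, Rmult_1_r. reflexivity.
    - intro s. unfold h. replace ((- s) ^ 2) with (s ^ 2) by ring.
      replace (- s * t) with (- (s * t)) by ring. rewrite cos_neg. reflexivity. }
  rewrite E, tp_prod_sum by exact Ha. unfold tp_sum, Rdiv.
  rewrite Rmult_comm, <- fsum_scal, <- fsum_minus.
  eapply Rle_trans; [apply fsum_abs |].
  rewrite <- fsum_const. apply fsum_le. intros j Hj.
  rewrite <- INR_IZR_INZ.
  replace (/ c * (tp_coef a N (Z.of_nat j) * cos ((INR j - INR N) * t)) - h (INR j - INR N))
    with ((tp_coef a N (Z.of_nat j) / c - exp (- a * (INR j - INR N) ^ 2))
          * cos ((INR j - INR N) * t))
    by (unfold h, Rdiv; ring).
  rewrite Rabs_mult.
  assert (Hcos : Rabs (cos ((INR j - INR N) * t)) <= 1) by apply Rabs_le, COS_bound.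
  assert (H := tp_coef_ratio_error N j ltac:(lia)). fold c in H.
  eapply Rle_trans; [apply Rmult_le_compat_l; [apply Rabs_pos | exact Hcos] | lra].
Qed.

Lemma tp_normalized_error_le N :
  INR (2 * N + 1) * (INR N * exp (- a * (2 * INR N + 1))) <= 6 / a ^ 3 / (INR N + 1).
Proof.
  set (m := INR (2 * N + 1)).
  assert (Hm : m = 2 * INR N + 1) by (unfold m; rewrite plus_INR, mult_INR; simpl; ring).
  rewrite <- Hm.
  assert (HN : 0 <= INR N) by apply pos_INR.
  assert (Ha3 : 0 < a ^ 3) by (apply pow_lt; lra).
  set (E := exp (- a * m)).
  assert (HE0 : 0 < E) by apply exp_pos.
  assert (He : 0 < exp (a * m)) by apply exp_pos.
  assert (HE : E * exp (a * m) = 1).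
  { unfold E; rewrite <- exp_plus. replace (- a * m + a * m) with 0 by ring. apply exp_0. }
  assert (Hb : m * m * E <= 6 / (a ^ 3 * m)).
  { assert (H3 := pow_le_fact_exp 3 (a * m) ltac:(apply Rmult_le_pos; lra)).
    simpl (INR (fact 3)) in H3.
    apply (Rmult_le_reg_r (a ^ 3 * m * exp (a * m))); [apply Rmult_lt_0_compat; nra |].
    replace (m * m * E * (a ^ 3 * m * exp (a * m))) with ((a * m) ^ 3 * (E * exp (a * m))) by ring.
    replace (6 / (a ^ 3 * m) * (a ^ 3 * m * exp (a * m))) with (6 * exp (a * m))
      by (field; split; lra).
    rewrite HE. lra. }
  assert (m * (INR N * E) <= m * m * E).
  { rewrite <- Rmult_assoc. apply Rmult_le_compat_r; [lra |]. apply Rmult_le_compat_l; lra. }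
  assert (6 / (a ^ 3 * m) <= 6 / a ^ 3 / (INR N + 1)).
  { unfold Rdiv. rewrite Rinv_mult, Rmult_assoc. apply Rmult_le_compat_l; [lra |].
    apply Rmult_le_compat_l; [left; apply Rinv_0_lt_compat; lra |].
    apply Rinv_le_contravar; lra. }
  lra.
Qed.

Lemma is_lim_seq_tp_normalized t :
  is_lim_seq (fun N => tp_prod a t N / tp_coef a N (Z.of_nat N)) (theta3 a t).
Proof.
  set (u := fun N => tp_prod a t N / tp_coef a N (Z.of_nat N)).
  set (s := fun N => 1 + 2 * fsum (theta3_term a t) N).
  assert (Hs : is_lim_seq s (theta3 a t)).
  { apply is_lim_seq_plus'; [apply is_lim_seq_const |].
    apply (is_lim_seq_scal_l _ 2 (Series (theta3_term a t))).
    apply is_lim_seq_fsum, ex_series_theta3_term; auto. }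
  assert (Hd : is_lim_seq (fun N => u N - s N) 0).
  { apply (is_lim_seq_le_le (fun N => - (6 / a ^ 3) / (INR N + 1)) _
                            (fun N => 6 / a ^ 3 / (INR N + 1)));
      [| apply is_lim_seq_div_succ | apply is_lim_seq_div_succ].
    intro N. assert (H1 := tp_normalized_error t N). assert (H2 := tp_normalized_error_le N).
    assert (0 <= INR N) by apply pos_INR.
    replace (- (6 / a ^ 3) / (INR N + 1)) with (- (6 / a ^ 3 / (INR N + 1))) by (field; lra).
    unfold u, s. apply Rabs_le_between. lra. }
  replace (theta3 a t) with (theta3 a t + 0) by ring.
  eapply is_lim_seq_ext; [| apply (is_lim_seq_plus' _ _ _ _ Hs Hd)].
  intro N. simpl. ring.
Qed.

End ProductLimit.

Lemma decr_midconvex_lim (f : nat -> R -> R) (g : R -> R) :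
  (forall N, decr_midconvex (f N)) -> (forall t, is_lim_seq (fun N => f N t) (g t)) ->
  decr_midconvex g.
Proof.
  intros Hf Hlim.
  assert (Hle : forall u v : nat -> R, forall l m : R,
             (forall N, u N <= v N) -> is_lim_seq u l -> is_lim_seq v m -> l <= m).
  { intros u v l m Huv Hu Hv. exact (is_lim_seq_le u v l m Huv Hu Hv). }
  split.
  - intro t. apply (Hle (fun _ => 0) (fun N => f N t)); [| apply is_lim_seq_const | auto].
    intro N. apply (decr_midconvex_nonneg _ (Hf N)).
  - intros x y Hx Hxy Hy. apply (Hle (fun N => f N y) (fun N => f N x)); auto.
    intro N. apply (decr_midconvex_decr _ (Hf N)); auto.
  - intros x h Hh H1 H2.
    apply (Hle (fun N => 2 * f N x) (fun N => f N (x + h) + f N (x - h))).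
    + intro N. apply (decr_midconvex_mid _ (Hf N)); auto.
    + apply (is_lim_seq_scal_l _ 2 (g x)); auto.
    + apply is_lim_seq_plus'; auto.
Qed.

Lemma decr_midconvex_theta3 a : 0 < a -> decr_midconvex (theta3 a).
Proof.
  intros Ha.
  apply (decr_midconvex_lim (fun N t => tp_prod a t N * / tp_coef a N (Z.of_nat N))).
  - intro N. apply (decr_midconvex_mult (fun t => tp_prod a t N)); [apply decr_midconvex_tp_prod |].
    apply decr_midconvex_const. left; apply Rinv_0_lt_compat, tp_coef_center_pos; exact Ha.
  - intro t. apply is_lim_seq_tp_normalized; exact Ha.
Qed.

(** * The heat equation *)

(** [-2 * gauss_k2_cos a t] is both [d theta3 / da] and [d^2 theta3 / dt^2]. *)
Definition gauss_k2_cos (a t : R) : R :=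
  Series (fun n => INR (S n) ^ 2 * exp (- a * INR (S n) ^ 2) * cos (INR (S n) * t)).

Definition gauss_k4 (a : R) : R :=
  Series (fun n => INR (S n) ^ 4 * exp (- a * INR (S n) ^ 2) * 1).

Lemma cos_taylor2_error u : Rabs (cos u - 1 + u ^ 2 / 2) <= u ^ 4.
Proof.
  assert (H4 : 0 <= u ^ 4) by (replace (u ^ 4) with ((u ^ 2) ^ 2) by ring; apply pow2_ge_0).
  destruct (Rle_lt_dec (Rabs u) 2) as [H | H].
  - apply Rabs_le_between in H.
    assert (B := pre_cos_bound u 0 ltac:(lra) ltac:(lra)).
    unfold cos_approx, cos_term in B. simpl in B. destruct B as [B1 B2].
    assert (1 - u ^ 2 / 2 <= cos u) by (eapply Rle_trans; [right | exact B1]; field).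
    assert (cos u <= 1 - u ^ 2 / 2 + u ^ 4 / 24) by (eapply Rle_trans; [exact B2 | right]; field).
    apply Rabs_le. lra.
  - assert (Hc := COS_bound u).
    assert (4 < u ^ 2) by (unfold Rabs in H; destruct (Rcase_abs u); nra).
    apply Rabs_le. nra.
Qed.

Lemma Rle_0_of_le_sq_mul (x c d : R) : 0 < d -> 0 <= c ->
  (forall h, 0 < h -> h <= d -> x <= h ^ 2 * c) -> x <= 0.
Proof.
  intros Hd Hc H. destruct (Rle_lt_dec x 0) as [Hx | Hx]; auto.
  set (h := Rmin (Rmin d 1) (x / (c + 1))).
  assert (Hh : 0 < h) by (apply Rmin_glb_lt; [apply Rmin_glb_lt | apply Rdiv_lt_0_compat]; lra).
  assert (Hh1 : h <= Rmin d 1) by apply Rmin_l.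
  assert (Hhd : h <= d) by (eapply Rle_trans; [exact Hh1 | apply Rmin_l]).
  assert (Hh2 : h <= 1) by (eapply Rle_trans; [exact Hh1 | apply Rmin_r]).
  assert (Hhx : h * (c + 1) <= x).
  { assert (Hmin : h <= x / (c + 1)) by apply Rmin_r.
    apply (Rmult_le_compat_r (c + 1)) in Hmin; [| lra].
    unfold Rdiv in Hmin. rewrite Rmult_assoc, Rinv_l, Rmult_1_r in Hmin by lra. exact Hmin. }
  specialize (H h Hh Hhd). nra.
Qed.

Section HeatEquation.

Variable a : R.
Hypothesis Ha : 0 < a.

Lemma ex_series_gauss_k2_cos t :
  ex_series (fun n => INR (S n) ^ 2 * exp (- a * INR (S n) ^ 2) * cos (INR (S n) * t)).
Proof. apply ex_series_gauss_moment; auto. intro; apply Rabs_le, COS_bound. Qed.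

Lemma ex_series_gauss_k4 : ex_series (fun n => INR (S n) ^ 4 * exp (- a * INR (S n) ^ 2) * 1).
Proof. apply ex_series_gauss_moment; auto. intro; rewrite Rabs_R1; lra. Qed.

Lemma gauss_k4_nonneg : 0 <= gauss_k4 a.
Proof.
  unfold gauss_k4. apply Rle_trans with (Series (fun _ => 0 * 0)); [rewrite Series_scal_l; lra |].
  apply Series_le; [| apply ex_series_gauss_k4].
  intro n. split; [lra |]. rewrite Rmult_1_r, Rmult_0_l.
  apply Rmult_le_pos; [apply pow_le, pos_INR | left; apply exp_pos].
Qed.

(** Second-order Taylor expansion of each term, with a uniform remainder. *)
Lemma theta3_second_difference t h :
  Series (theta3_term a (t + h)) + Series (theta3_term a (t - h)) - 2 * Series (theta3_term a t)
  <= - h ^ 2 * gauss_k2_cos a t + 2 * (h ^ 4 * gauss_k4 a).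
Proof.
  set (e := fun n => exp (- a * INR (S n) ^ 2)).
  set (c := fun n => cos (INR (S n) * t)).
  set (rem := fun n => e n * c n * (cos (INR (S n) * h) - 1 + (INR (S n) * h) ^ 2 / 2)).
  set (b := fun n => h ^ 4 * (INR (S n) ^ 4 * e n * 1)).
  assert (Hrem : forall n, Rabs (rem n) <= b n).
  { intro n. unfold rem, b.
    assert (He : 0 < e n) by apply exp_pos.
    assert (Hc : Rabs (c n) <= 1) by apply Rabs_le, COS_bound.
    assert (B := cos_taylor2_error (INR (S n) * h)).
    rewrite !Rabs_mult, (Rabs_right (e n)) by lra.
    replace (h ^ 4 * (INR (S n) ^ 4 * e n * 1)) with (e n * 1 * (INR (S n) * h) ^ 4) by ring.
    apply Rmult_le_compat; try apply Rmult_le_pos; try apply Rabs_pos; try lra.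
    apply Rmult_le_compat_l; lra. }
  assert (Hb : ex_series b).
  { apply (ex_series_scal_l (h ^ 4) (fun n => INR (S n) ^ 4 * e n * 1)), ex_series_gauss_k4. }
  assert (Hex : forall s, ex_series (theta3_term a s))
    by (intro; apply ex_series_theta3_term; auto).
  assert (Eq : Series (theta3_term a (t + h)) + Series (theta3_term a (t - h))
                 - 2 * Series (theta3_term a t)
               = - h ^ 2 * gauss_k2_cos a t + 2 * Series rem).
  { unfold gauss_k2_cos. rewrite <- !Series_scal_l, <- Series_plus, <- Series_minus, <- Series_plus;
      [| apply (ex_series_scal_l (- h ^ 2) (fun n => _ * e n * c n)), ex_series_gauss_k2_cos
       | apply (ex_series_scal_l 2 rem), (ex_series_dominated rem b); auto
       | apply (ex_series_plus (theta3_term a (t + h)) (theta3_term a (t - h))); auto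
       | apply (ex_series_scal_l 2 (theta3_term a t)); auto | auto | auto].
    apply Series_ext. intro n. unfold theta3_term, rem, e, c.
    replace (INR (S n) * (t + h)) with (INR (S n) * t + INR (S n) * h) by ring.
    replace (INR (S n) * (t - h)) with (INR (S n) * t - INR (S n) * h) by ring.
    rewrite cos_plus, cos_minus. field. }
  assert (Bd : Series rem <= h ^ 4 * gauss_k4 a).
  { eapply Rle_trans; [apply Rle_abs |].
    eapply Rle_trans; [apply Series_Rabs |].
    - apply (ex_series_dominated _ b); auto. intro n; rewrite Rabs_Rabsolu; auto.
    - unfold gauss_k4. rewrite <- Series_scal_l. apply Series_le; auto.
      intro n. split; [apply Rabs_pos | apply Hrem]. }
  lra.
Qed.

Lemma gauss_k2_cos_le t h : 0 < h -> PI / 2 <= t - h -> t + h <= PI ->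
  gauss_k2_cos a t <= h ^ 2 * (2 * gauss_k4 a).
Proof.
  intros Hh H1 H2.
  assert (Mid := decr_midconvex_mid _ (decr_midconvex_theta3 a Ha) t h ltac:(lra) H1 H2).
  assert (D := theta3_second_difference t h). unfold theta3 in Mid.
  assert (Hh2 : 0 < h ^ 2) by (apply pow_lt; lra).
  apply (Rmult_le_reg_l (h ^ 2)); auto. nra.
Qed.

Lemma gauss_k2_cos_nonpos t : PI / 2 < t -> t < PI -> gauss_k2_cos a t <= 0.
Proof.
  intros H1 H2.
  apply (Rle_0_of_le_sq_mul _ (2 * gauss_k4 a) (Rmin (t - PI / 2) (PI - t))).
  - apply Rmin_glb_lt; lra.
  - assert (H := gauss_k4_nonneg). lra.
  - intros h Hh Hhd. apply gauss_k2_cos_le; auto.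
    + assert (Rmin (t - PI / 2) (PI - t) <= t - PI / 2) by apply Rmin_l. lra.
    + assert (Rmin (t - PI / 2) (PI - t) <= PI - t) by apply Rmin_r. lra.
Qed.

End HeatEquation.

Lemma is_derive_fsum_theta3_term t N a :
  is_derive (fun a => fsum (theta3_term a t) N) a
    (- fsum (fun n => INR (S n) ^ 2 * exp (- a * INR (S n) ^ 2) * cos (INR (S n) * t)) N).
Proof.
  induction N as [|N IH]; simpl.
  - rewrite Ropp_0. apply (is_derive_const 0).
  - rewrite Ropp_plus_distr.
    apply (is_derive_plus (fun a => fsum (theta3_term a t) N) (fun a => theta3_term a t N)); auto.
    unfold theta3_term. auto_derive; auto. ring.
Qed.

Section MonotoneInA.

Variables a1 a2 t : R.
Hypotheses (Ha1 : 0 < a1) (Ha12 : a1 <= a2) (Ht1 : PI / 2 < t) (Ht2 : t < PI).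

Let k2_weight (n : nat) : R := INR (S n) ^ 2 * exp (- a1 * INR (S n) ^ 2) * 1.

Lemma ex_series_k2_weight : ex_series k2_weight.
Proof. apply ex_series_gauss_moment; auto. intro; rewrite Rabs_R1; lra. Qed.

(** Mean value theorem on the partial sum: its [a]-derivative at [xi] is [- fsum g N], where
    [- Series g >= 0] by [gauss_k2_cos_nonpos]; the remaining tail of [g] is dominated by the
    tail of [k2_weight]. *)
Lemma fsum_theta3_term_incr_a N :
  - ((Series k2_weight - fsum k2_weight N) * (a2 - a1))
  <= fsum (theta3_term a2 t) N - fsum (theta3_term a1 t) N.
Proof.
  destruct (MVT_gen (fun a => fsum (theta3_term a t) N) a1 a2
    (fun a => - fsum (fun n => INR (S n) ^ 2 * exp (- a * INR (S n) ^ 2) * cos (INR (S n) * t)) N))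
    as [xi [Hxi ->]].
  - intros; apply is_derive_fsum_theta3_term.
  - intros x _. apply continuity_pt_filterlim.
    apply (ex_derive_continuous (fun a => fsum (theta3_term a t) N)).
    eexists. apply is_derive_fsum_theta3_term.
  - rewrite Rmin_left, Rmax_right in Hxi by lra.
    set (g := fun n => INR (S n) ^ 2 * exp (- xi * INR (S n) ^ 2) * cos (INR (S n) * t)).
    assert (Hgb : forall n, Rabs (g n) <= k2_weight n).
    { intro n. unfold g, k2_weight.
      assert (Hk : 0 <= INR (S n) ^ 2) by apply pow2_ge_0.
      assert (exp (- xi * INR (S n) ^ 2) <= exp (- a1 * INR (S n) ^ 2))
        by (apply exp_le_compat; nra).
      assert (Rabs (cos (INR (S n) * t)) <= 1) by apply Rabs_le, COS_bound.
      assert (He := exp_pos (- xi * INR (S n) ^ 2)).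
      rewrite !Rabs_mult, Rabs_right, (Rabs_right (exp _)) by lra.
      apply Rmult_le_compat; try apply Rmult_le_pos; try apply Rabs_pos; try lra.
      apply Rmult_le_compat_l; lra. }
    assert (Tail := series_tail_le g k2_weight N Hgb ex_series_k2_weight).
    assert (D := gauss_k2_cos_nonpos xi ltac:(lra) t Ht1 Ht2).
    unfold gauss_k2_cos in D. fold g in D.
    apply Rabs_le_between in Tail.
    assert (fsum g N <= Series k2_weight - fsum k2_weight N) by lra.
    assert (0 <= a2 - a1) by lra.
    nra.
Qed.

Lemma theta3_incr_a : theta3 a1 t <= theta3 a2 t.
Proof.
  assert (Hle := is_lim_seq_le (fun N => - ((Series k2_weight - fsum k2_weight N) * (a2 - a1)))
    (fun N => fsum (theta3_term a2 t) N - fsum (theta3_term a1 t) N)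
    0 (Series (theta3_term a2 t) - Series (theta3_term a1 t)) fsum_theta3_term_incr_a).
  unfold theta3. cut (0 <= Series (theta3_term a2 t) - Series (theta3_term a1 t)); [lra |].
  apply Hle.
  - assert (H := is_lim_seq_scal_l _ (- (a2 - a1)) 0
                   (is_lim_seq_series_tail k2_weight ex_series_k2_weight)).
    simpl in H. rewrite Rmult_0_r in H.
    eapply is_lim_seq_ext; [| exact H]. intro N. simpl. ring.
  - apply is_lim_seq_minus'; apply is_lim_seq_fsum, ex_series_theta3_term; lra.
Qed.

End MonotoneInA.


Definition theta_angle (y : R) : R := 2 * PI * (1 / 2 - 1 / (8 * y ^ 2)).

Lemma theta_fun_theta3 alpha y : theta_fun alpha y = theta3 (PI * alpha / y) (theta_angle y).
Proof.
  unfold theta_fun, theta3, theta_angle. do 2 f_equal.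
  apply Series_ext. intro n. unfold theta_term, theta3_term. do 2 f_equal. ring.
Qed.

Lemma theta_angle_bounds y1 y2 : sqrt 3 / 2 <= y1 -> y1 <= y2 ->
  PI / 2 < theta_angle y1 /\ theta_angle y1 <= theta_angle y2 /\ theta_angle y2 < PI.
Proof.
  intros H1 H12. unfold theta_angle.
  assert (Hs : 0 < sqrt 3) by (apply sqrt_lt_R0; lra).
  assert (Hs2 : sqrt 3 * sqrt 3 = 3) by (apply sqrt_sqrt; lra).
  assert (HPI := PI_RGT_0).
  assert (Hy1 : 3 / 4 <= y1 ^ 2) by nra.
  assert (Hy12 : y1 ^ 2 <= y2 ^ 2) by nra.
  assert (Hi1 : 1 / (8 * y1 ^ 2) <= 1 / 6).
  { apply Rmult_le_reg_r with (8 * y1 ^ 2); [lra |]. field_simplify; lra. }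
  assert (Hi12 : 1 / (8 * y2 ^ 2) <= 1 / (8 * y1 ^ 2)).
  { unfold Rdiv. rewrite !Rmult_1_l. apply Rinv_le_contravar; lra. }
  assert (Hi2 : 0 < 1 / (8 * y2 ^ 2)) by (apply Rdiv_lt_0_compat; nra).
  repeat split; nra.
Qed.

Theorem mainTheorem14 (alpha : R) (Halpha : 0 < alpha) :
  forall y1 y2 : R,
    sqrt 3 / 2 <= y1 -> y1 <= y2 ->
    theta_fun alpha y2 <= theta_fun alpha y1.
Proof.
  intros y1 y2 H1 H12.
  assert (HPI := PI_RGT_0).
  assert (Hy1 : 0 < y1) by (assert (0 < sqrt 3) by (apply sqrt_lt_R0; lra); lra).
  destruct (theta_angle_bounds y1 y2 H1 H12) as (Ht1 & Ht12 & Ht2).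
  assert (Ha2 : 0 < PI * alpha / y2) by (apply Rdiv_lt_0_compat; nra).
  assert (Ha12 : PI * alpha / y2 <= PI * alpha / y1).
  { apply Rmult_le_compat_l; [nra | apply Rinv_le_contravar; lra]. }
  rewrite !theta_fun_theta3.
  apply Rle_trans with (theta3 (PI * alpha / y2) (theta_angle y1)).
  - apply (decr_midconvex_decr _ (decr_midconvex_theta3 _ Ha2)); lra.
  - apply theta3_incr_a; lra.
Qed.
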